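(* Let $\Omega\subseteq\mathbb{H}$ be a domain such that $\Omega\cap\mathbb{R}\neq\emptyset$. Then its symmetric completion $\widetilde{\Omega}=\bigcup_{x+yJ\in\Omega}(x+y\mathbb{S})$ is an axially symmetric s-domain.
   Context: $\mathbb{H}$ denotes the quaternions, $\mathbb{S}=\{q\in\mathbb{H}: \mathrm{Re}(q)=0,\ |\mathrm{Im}(q)|=1\}$ the 2-sphere of imaginary units, $L_I=\mathbb{R}+\mathbb{R}I$ for $I\in\mathbb{S}$, and $x+y\mathbb{S}=\{x+yL: L\in\mathbb{S}\}$ for $x,y\in\mathbb{R}$. A domain is a connected open set. A domain $\Omega$ is an s-domain if $\Omega\cap\mathbb{R}\neq\emptyset$ and $\Omega\cap L_I$ is a domain in $L_I$ for every $I\in\mathbb{S}$. A set $\Omega$ is axially symmetric if for every $x+yI\in\Omega$ ($x,y\in\mathbb{R}$, $I\in\mathbb{S}$) the sphere $x+y\mathbb{S}$ is contained in $\Omega$. *)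

From HB Require Import structures.
From mathcomp Require Import all_boot all_order all_algebra.
From mathcomp Require Import all_classical all_reals all_analysis.
Set Implicit Arguments. Unset Strict Implicit. Unset Printing Implicit Defensive.
Import Order.TTheory GRing.Theory Num.Theory.
Import numFieldNormedType.Exports.
Local Open Scope classical_set_scope.
Local Open Scope ring_scope.

(* Quaternions q = a + b i + c j + d k represented as the tuple (a,b,c,d)
   in R*R*R*R, with the (Euclidean = product) topology of R^4. *)
Notation quat R := (R * R * R * R)%type.

Section Quat.
Variable R : realType.

Definition qmk (a b c d : R) : quat R := (a, b, c, d).
Definition qre (q : quat R) : R := q.1.1.1.
Definition qi (q : quat R) : R := q.1.1.2.
Definition qj (q : quat R) : R := q.1.2.
Definition qk (q : quat R) : R := q.2.

Definition qadd (p q : quat R) : quat R :=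
  qmk (qre p + qre q) (qi p + qi q) (qj p + qj q) (qk p + qk q).
Definition qscale (y : R) (q : quat R) : quat R :=
  qmk (y * qre q) (y * qi q) (y * qj q) (y * qk q).
Definition qreal (x : R) : quat R := qmk x 0 0 0.

Definition qxy (x y : R) (I : quat R) : quat R := qadd (qreal x) (qscale y I).

Definition Sph : set (quat R) :=
  [set q | qre q = 0 /\ qi q ^+ 2 + qj q ^+ 2 + qk q ^+ 2 = 1].

Definition realaxis : set (quat R) := [set q | exists x : R, q = qreal x].

Definition sliceL (I : quat R) : set (quat R) := [set q | exists x y : R, q = qxy x y I].

Definition qsphere (x y : R) : set (quat R) := [set q | exists L, Sph L /\ q = qxy x y L].

Definition domain (A : set (quat R)) : Prop := open A /\ connected A.

Definition domain_in_slice (I : quat R) (A : set (quat R)) : Prop :=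
  A `<=` sliceL I /\ (exists2 U, open U & A = U `&` sliceL I) /\ connected A.

Definition s_domain (A : set (quat R)) : Prop :=
  domain A /\ A `&` realaxis !=set0 /\
  forall I, Sph I -> domain_in_slice I (A `&` sliceL I).

Definition axially_symmetric (A : set (quat R)) : Prop :=
  forall (x y : R) (I : quat R), Sph I -> A (qxy x y I) -> qsphere x y `<=` A.

Definition sym_completion (A : set (quat R)) : set (quat R) :=
  [set q | exists (x y : R) (J : quat R), [/\ Sph J, A (qxy x y J) & qsphere x y q]].

End Quat.
Arguments realaxis {R}.

From HB Require Import structures.
From mathcomp Require Import all_boot all_order all_algebra.
From mathcomp Require Import all_classical all_reals all_analysis.
From mathcomp Require Import lra.
Import Order.TTheory GRing.Theory Num.Theory.
Import numFieldNormedType.Exports.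
Local Open Scope classical_set_scope.
Local Open Scope ring_scope.
Set Implicit Arguments.
Unset Strict Implicit.

(* A point x + yJ of H lies in x + y S exactly when it has real part x and
   imaginary norm |y|, so the symmetric completion of A consists of the points
   whose (real part, imaginary norm) is attained in A.  For a unit I and
   s = +-1, the continuous map p |-> Re p + s |Im p| I preserves these two
   invariants and fixes the real axis.  Hence the completion is the union over
   I of the images of A under the maps with s = 1, all connected and sharing
   a real point of A; its trace on L_I is the union of the two images with
   s = 1 and s = -1; and it is open because near any of its points it is the
   preimage of A under one of these maps. *)

Lemma continuous_pair (T U V : topologicalType) (f : T -> U) (g : T -> V) :
  continuous f -> continuous g -> continuous (fun t => (f t, g t)).
Proof. by move=> cf cg x; exact: cvg_pair (cf x) (cg x). Qed.

Section SymmetricCompletion.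
Variable R : realType.
Implicit Types (A : set (quat R)) (p q I L : quat R) (x y s : R).

Definition qimnorm p : R := Num.sqrt (qi p ^+ 2 + qj p ^+ 2 + qk p ^+ 2).

Definition to_slice s I p : quat R := qxy (qre p) (s * qimnorm p) I.

Lemma qxyE x y L : qxy x y L = (x + y * qre L, y * qi L, y * qj L, y * qk L).
Proof. by rewrite /qxy /qadd /qmk /qreal /qscale /= !add0r. Qed.

Lemma qre_qxy x y L : Sph L -> qre (qxy x y L) = x.
Proof. by case=> L0 _; rewrite qxyE /qre /= -/(qre L) L0 mulr0 addr0. Qed.

Lemma qimnorm_qxy x y L : Sph L -> qimnorm (qxy x y L) = `|y|.
Proof.
case=> _ L1; rewrite /qimnorm qxyE /qi /qj /qk /= !exprMn -!mulrDr.
by move: L1; rewrite /qi /qj /qk => ->; rewrite mulr1 sqrtr_sqr.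
Qed.

Lemma qimnorm_ge0 p : 0 <= qimnorm p.
Proof. exact: sqrtr_ge0. Qed.

Lemma qimnorm_eq0 p : qimnorm p = 0 -> p = qreal (qre p).
Proof.
move/eqP; rewrite sqrtr_eq0 => le0.
have /eqP : qi p ^+ 2 + qj p ^+ 2 + qk p ^+ 2 = 0.
  by apply/eqP; rewrite eq_le le0 !addr_ge0 ?sqr_ge0.
rewrite !paddr_eq0 ?addr_ge0 ?sqr_ge0 // !sqrf_eq0 => /andP[/andP[/eqP i0 /eqP j0] /eqP k0].
by case: p i0 j0 k0 {le0} => [[[a b] c] d]; rewrite /qi /qj /qk /= => -> -> ->.
Qed.

Lemma qxy_polar p : exists2 u, Sph u & p = qxy (qre p) (qimnorm p) u.
Proof.
have [r0|rn0] := eqVneq (qimnorm p) 0.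
  exists (qmk 0 1 0 0); first by split=> //=; rewrite /qi /qj /qk /= expr1n expr0n /=; lra.
  by rewrite r0 {1}(qimnorm_eq0 r0) qxyE /qreal /qmk /= !mul0r addr0.
set r := qimnorm p; have rpos : 0 < r by rewrite lt0r rn0 qimnorm_ge0.
have r2 : r ^+ 2 = qi p ^+ 2 + qj p ^+ 2 + qk p ^+ 2.
  by rewrite /r /qimnorm sqr_sqrtr // !addr_ge0 // sqr_ge0.
exists (qmk 0 (qi p / r) (qj p / r) (qk p / r)).
  split=> //; rewrite /qi /qj /qk /qmk /= !expr_div_n -!mulrDl -r2 divff //.
  by rewrite expf_neq0 // gt_eqF.
rewrite qxyE /qre /qi /qj /qk /qmk /= mulr0 addr0 !(mulrC r) !divfK ?gt_eqF //.
by case: p {r rn0 rpos r2}=> [[[a b] c] d].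
Qed.

Lemma sym_completionP A q :
  sym_completion A q <-> exists2 p, A p & qre p = qre q /\ qimnorm p = qimnorm q.
Proof.
split=> [[x [y [J [SJ AJ [L [SL ->]]]]]]|[p Ap [re_pq im_pq]]].
  by exists (qxy x y J); rewrite // !qre_qxy // !qimnorm_qxy.
have [J SJ pJ] := qxy_polar p; have [L SL qL] := qxy_polar q.
exists (qre p), (qimnorm p), J; split; rewrite -?pJ //.
by exists L; rewrite re_pq im_pq.
Qed.

Lemma sub_sym_completion A : A `<=` sym_completion A.
Proof. by move=> p Ap; apply/sym_completionP; exists p. Qed.

Lemma axially_symmetric_sym_completion A : axially_symmetric (sym_completion A).
Proof.
move=> x y J SJ /sym_completionP[p Ap]; rewrite qre_qxy // qimnorm_qxy // => pJ.
by move=> _ [L [SL ->]]; apply/sym_completionP; exists p; rewrite ?qre_qxy ?qimnorm_qxy.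
Qed.

Lemma qre_to_slice s I p : Sph I -> qre (to_slice s I p) = qre p.
Proof. exact: qre_qxy. Qed.

Lemma qimnorm_to_slice s I p :
  Sph I -> `|s| = 1 -> qimnorm (to_slice s I p) = qimnorm p.
Proof. by move=> SI s1; rewrite qimnorm_qxy // normrM s1 mul1r ger0_norm ?qimnorm_ge0. Qed.

Lemma to_slice_real s I x : to_slice s I (qreal x) = qreal x.
Proof.
rewrite /to_slice qxyE /qimnorm /qreal /qmk /qre /qi /qj /qk /=.
by rewrite !expr2 !mul0r !addr0 sqrtr0 !mulr0 !mul0r addr0.
Qed.

Lemma to_slice_sym_completion A s I p :
  Sph I -> `|s| = 1 -> A p -> sym_completion A (to_slice s I p).
Proof.
move=> SI s1 Ap; apply/sym_completionP; exists p => //.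
by rewrite qre_to_slice // qimnorm_to_slice.
Qed.

Lemma continuous_qre : continuous (@qre R).
Proof.
move=> p; apply: (continuous_comp (f := fun q : quat R => q.1.1)); last exact: cvg_fst.
by apply: continuous_comp; apply: cvg_fst.
Qed.

Lemma continuous_qi : continuous (@qi R).
Proof.
move=> p; apply: (continuous_comp (f := fun q : quat R => q.1.1)); last exact: cvg_snd.
by apply: continuous_comp; apply: cvg_fst.
Qed.

Lemma continuous_qj : continuous (@qj R).
Proof. by move=> p; apply: continuous_comp; [apply: cvg_fst|apply: cvg_snd]. Qed.

Lemma continuous_qk : continuous (@qk R).
Proof. by move=> p; apply: cvg_snd. Qed.

Lemma continuous_qimnorm : continuous qimnorm.
Proof.
have csqr (f : quat R -> R) p : continuous f -> {for p, continuous (fun p => f p ^+ 2)}.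
  by move=> cf; rewrite /GRing.exp /=; apply: continuousM; apply: cf.
move=> p; apply: continuous_comp; last exact: sqrt_continuous.
by apply: cvgD; [apply: cvgD|]; apply: csqr;
  [exact: continuous_qi|exact: continuous_qj|exact: continuous_qk].
Qed.

Lemma continuous_quat (T : topologicalType) (a b c d : T -> R) :
  continuous a -> continuous b -> continuous c -> continuous d ->
  continuous (fun t => (a t, b t, c t, d t)).
Proof.
move=> ca cb cc cd; apply: (@continuous_pair _ _ _ (fun t => (a t, b t, c t))) => //.
by apply: (@continuous_pair _ _ _ (fun t => (a t, b t))) => //; apply: continuous_pair.
Qed.

Lemma continuous_to_slice s I : continuous (to_slice s I).
Proof.
have coord (a : quat R -> R) c : continuous a ->
    continuous (fun p => a p + s * qimnorm p * c).
  move=> ca p; apply: cvgD; first exact: ca.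
  by apply: cvgM; [apply: cvgM|]; [exact: cvg_cst|exact: continuous_qimnorm|exact: cvg_cst].
have -> : to_slice s I = fun p => (qre p + s * qimnorm p * qre I,
    0 + s * qimnorm p * qi I, 0 + s * qimnorm p * qj I, 0 + s * qimnorm p * qk I).
  by apply/funext=> p; rewrite /to_slice qxyE !add0r.
by apply: continuous_quat; apply: coord; [exact: continuous_qre|exact: cst_continuous..].
Qed.

Lemma sym_completion_bigcup A :
  sym_completion A = \bigcup_(L in Sph (R:=R)) to_slice 1 L @` A.
Proof.
apply/seteqP; split=> q.
  move/sym_completionP=> [p Ap [re_pq im_pq]]; have [L SL qL] := qxy_polar q.
  by exists L => //; exists p; rewrite // /to_slice mul1r re_pq im_pq -qL.
by case=> L SL [p Ap <-]; apply: to_slice_sym_completion => //; apply: normr1.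
Qed.

Lemma sym_completion_sliceL A I : Sph I ->
  sym_completion A `&` sliceL I = to_slice 1 I @` A `|` to_slice (-1) I @` A.
Proof.
move=> SI; apply/seteqP; split=> q.
  case=> /sym_completionP[p Ap] re_im_p [x [y qE]].
  move: re_im_p; rewrite qE qre_qxy // qimnorm_qxy // => -[re_p im_p].
  have [y_ge0|y_lt0] := leP 0 y.
    by left; exists p; rewrite // /to_slice mul1r re_p im_p ger0_norm.
  by right; exists p; rewrite // /to_slice re_p im_p ltr0_norm // mulN1r opprK.
have in_slice s : `|s| = 1 -> to_slice s I @` A `<=` sym_completion A `&` sliceL I.
  move=> s1 _ [p Ap <-]; split; first exact: to_slice_sym_completion.
  by exists (qre p), (s * qimnorm p).
by case; apply: in_slice; rewrite ?normrN normr1.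
Qed.

Lemma to_slice_image_real A s I x : A (qreal x) -> (to_slice s I @` A) (qreal x).
Proof. by exists (qreal x); rewrite ?to_slice_real. Qed.

Lemma connected_to_slice_image A s I : connected A -> connected (to_slice s I @` A).
Proof.
by move=> cA; apply: connected_continuous_connected cA _;
  apply/continuous_subspaceT/continuous_to_slice.
Qed.

Lemma open_sym_completion A : open A -> open (sym_completion A).
Proof.
rewrite !openE => oA q /sym_completionP[p Ap [re_pq im_pq]].
have [u Su pu] := qxy_polar p.
have to_q : to_slice 1 u q = p by rewrite /to_slice mul1r -re_pq -im_pq -pu.
have : nbhs q (to_slice 1 u @^-1` A).
  move: (continuous_to_slice (s:=1) (I:=u) (x:=q)).
  by rewrite /continuous_at to_q; apply; apply: oA.
by apply: filterS => q' Aq'; apply/sym_completionP; exists (to_slice 1 u q');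
  rewrite // qre_to_slice // qimnorm_to_slice // normr1.
Qed.

Lemma connected_sym_completion A x :
  connected A -> A (qreal x) -> connected (sym_completion A).
Proof.
move=> cA Ax; rewrite sym_completion_bigcup; apply: bigcup_connected.
  by exists (qreal x) => L _; apply: to_slice_image_real.
by move=> L _; apply: connected_to_slice_image.
Qed.

Lemma connected_sym_completion_sliceL A x I : connected A -> A (qreal x) ->
  Sph I -> connected (sym_completion A `&` sliceL I).
Proof.
move=> cA Ax SI; rewrite sym_completion_sliceL //.
apply: connectedU; try exact: connected_to_slice_image.
by exists (qreal x); split; apply: to_slice_image_real.
Qed.

End SymmetricCompletion.

Theorem proposition3p4 (R : realType) (Omega : set (quat R)) :
  domain Omega -> Omega `&` @realaxis R !=set0 ->
  axially_symmetric (sym_completion Omega) /\ s_domain (sym_completion Omega).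
Proof.
move=> [openO connO] [q [Ox [x qE]]]; rewrite {q}qE in Ox.
split; first exact: axially_symmetric_sym_completion.
split; first by split; [apply: open_sym_completion | apply: connected_sym_completion Ox].
split; first by exists (qreal x); split; [apply: sub_sym_completion | exists x].
move=> I SI; split; first by move=> q [].
split; first by exists (sym_completion Omega); first exact: open_sym_completion.
exact: connected_sym_completion_sliceL Ox SI.
Qed.
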